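(* Let $k\ge1$ be an integer. Then $P_k(0,4,0)\not\equiv0\pmod p$ for every odd prime $p>k+2r-2$.
   Context: Fix an integer $r\ge1$ and indeterminates $\alpha,\beta,\gamma$. Define polynomials $c_n=c_n(\alpha,\beta,\gamma)\in\mathbb{Q}[\alpha,\beta,\gamma]$ by $c_n=0$ for $n<0$, $c_0=1$, and for every integer $n\ge-3$, $$(n+4)c_{n+4}+(2n+6-r)\alpha c_{n+3}+\left[(n+2-r)\alpha^2+(2n+5-2r)\frac{\alpha^2-\beta}{4}\right]c_{n+2}+\left[(2n+3-3r)\alpha\frac{\alpha^2-\beta}{4}+\frac{\gamma}{2}\right]c_{n+1}+\frac{1}{16}(\alpha^2-\beta)^2(n+1-2r)c_n=0.$$ For $k\ge1$ define $P_k(\alpha,\beta,\gamma):=\det\big(c_{k+2r-1+j-i}\big)_{1\le i,j\le k}$. $P_k(0,4,0)$ is its value at $\alpha=0,\beta=4,\gamma=0$, a rational number; $x\not\equiv0\pmod p$ means $x$ has denominator prime to $p$ and $x\notin p\mathbb{Z}_{(p)}$. *)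

From HB Require Import structures.
From mathcomp Require Import all_boot all_order all_algebra.
Set Implicit Arguments. Unset Strict Implicit. Unset Printing Implicit Defensive.
Import Order.TTheory GRing.Theory Num.Theory.
Local Open Scope ring_scope.

(* cs r a b g m = (c_m, c_{m-1}, c_{m-2}, c_{m-3}), with c_n = 0 for n < 0,
   c_0 = 1, and for m >= 1 (i.e. n = m - 4 >= -3) the recurrence solved
   for c_m = c_{n+4}, evaluated at alpha = a, beta = b, gamma = g. *)
Fixpoint cs (r : nat) (a b g : rat) (m : nat) : rat * rat * rat * rat :=
  match m with
  | 0 => (1, 0, 0, 0)
  | m'.+1 =>
    let '(x1, x2, x3, x4) := cs r a b g m' in
    let M : int := m'.+1%:Z in
    let R : int := r%:Z in
    let d := (a ^+ 2 - b) / 4 in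
    let new :=
      - (M%:~R)^-1 *
        ( ((2 * M - 2 - R)%:~R * a) * x1
        + ((M - 2 - R)%:~R * a ^+ 2 + (2 * M - 3 - 2 * R)%:~R * d) * x2
        + ((2 * M - 5 - 3 * R)%:~R * a * d + g / 2) * x3
        + ((M - 3 - 2 * R)%:~R * d ^+ 2) * x4 ) in
    (new, x1, x2, x3)
  end.

Definition c (r : nat) (a b g : rat) (n : int) : rat :=
  match n with
  | Posz m => (cs r a b g m).1.1.1
  | Negz _ => 0
  end.

Definition P (r k : nat) (a b g : rat) : rat :=
  \det (\matrix_(i < k, j < k)
          c r a b g (k%:Z + 2 * r%:Z - 1 + j%:Z - i%:Z)).

Definition not_zero_modp (p : nat) (x : rat) : bool :=
  ~~ (p%:Z %| denq x)%Z && ~~ (p%:Z %| numq x)%Z.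

(* At (alpha, beta, gamma) = (0, 4, 0) the recurrence collapses to
   (n + 4) c_(n+4) = (2n + 5 - 2r) c_(n+2) - (n + 1 - 2r) c_n, so the c_n are the
   Taylor coefficients of (1 - x^2)^(r - 1/2): c_(2t) = (-1)^t binom(r - 1/2, t)
   and the odd ones vanish.  Listing rows and columns of the Toeplitz matrix by
   parity makes it block triangular, so P_k is, up to sign, a product of two
   determinants det (binom(r - 1/2, M + j - i)).  Such a determinant has a
   product formula whose factors are halves of odd integers and integers, all
   of absolute value below p when p > k + 2r - 2.  So P_k is a unit of Z_(p). *)

From mathcomp Require Import all_boot all_order all_algebra all_fingroup.
From mathcomp Require Import zify ring.
Set Implicit Arguments. Unset Strict Implicit. Unset Printing Implicit Defensive.
Import Order.TTheory GRing.Theory Num.Theory.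
Local Open Scope ring_scope.

Section GeneralizedBinomial.

Variable R : numFieldType.
Implicit Types (x : R) (n : nat).

Definition ffactr x n : R := \prod_(t < n) (x - t%:R).

Definition binr x n : R := ffactr x n / n`!%:R.

Lemma ffactr0 x : ffactr x 0 = 1.
Proof. by rewrite /ffactr big_ord0. Qed.

Lemma ffactrSr x n : ffactr x n.+1 = ffactr x n * (x - n%:R).
Proof. by rewrite /ffactr big_ord_recr. Qed.

Lemma ffactrS x n : ffactr x n.+1 = x * ffactr (x - 1) n.
Proof.
rewrite /ffactr big_ord_recl subr0; congr (_ * _); apply: eq_bigr => t _.
by rewrite /= /bump /= add1n -natr1 opprD addrA addrAC.
Qed.

Lemma ffactrD x m n : ffactr x (m + n) = ffactr x m * ffactr (x - m%:R) n.
Proof.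
elim: n => [|n IHn]; first by rewrite addn0 ffactr0 mulr1.
by rewrite addnS !ffactrSr IHn natrD opprD addrA mulrA.
Qed.

Lemma ffactrnn n : ffactr n%:R n = n`!%:R.
Proof.
elim: n => [|n IHn]; first by rewrite ffactr0.
by rewrite ffactrS factS natrM -natr1 addrK IHn.
Qed.

Lemma fact_neq0 n : n`!%:R != 0 :> R.
Proof. by rewrite pnatr_eq0 -lt0n fact_gt0. Qed.

Lemma binr0 x : binr x 0 = 1.
Proof. by rewrite /binr ffactr0 divr1. Qed.

Lemma binrSr x n : binr x n.+1 = binr x n * (x - n%:R) / n.+1%:R.
Proof.
rewrite /binr ffactrSr factS natrM.
by field; rewrite fact_neq0 nat1r pnatr_eq0.
Qed.

Lemma binrS x n : binr (x + 1) n.+1 = binr x n.+1 + binr x n.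
Proof.
rewrite /binr ffactrS addrK ffactrSr factS natrM.
by field; rewrite fact_neq0 nat1r pnatr_eq0.
Qed.

Lemma binr_addn j L x :
  binr (x + j%:R) (L + j) = \sum_(s < j.+1) 'C(j, s)%:R * binr x (L + s).
Proof.
elim: j L x => [|j IHj] L x; first by rewrite big_ord1 addr0 addn0 bin0 mul1r.
rewrite -natr1 addrA addnS binrS -addSn !IHj [in RHS]big_ord_recl /= bin0 addn0 mul1r.
have pascal (s : 'I_j.+1) : 'C(j.+1, bump 0 s)%:R * binr x (L + bump 0 s) =
    'C(j, s)%:R * binr x (L.+1 + s) + 'C(j, s.+1)%:R * binr x (L + s.+1).
  by rewrite /bump /= add1n binS natrD mulrDl addrC addSnnS.
rewrite (eq_bigr _ (fun s _ => pascal s)) big_split /= addrCA; congr (_ + _).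
rewrite big_ord_recl /= bin0 addn0 mul1r; congr (_ + _).
rewrite [in RHS]big_ord_recr /= bin_small // mul0r addr0.
by apply: eq_bigr => s _; rewrite /bump /= add1n.
Qed.

Lemma binr_subn x n i : (i <= n)%N -> ffactr (x - (n - i)%:R) i != 0 ->
  binr x (n - i) = (ffactr (x - (n - i)%:R) i)^-1 * ffactr n%:R i * binr x n.
Proof.
move=> le_in ff_neq0.
have split_nn : ffactr n%:R n = ffactr n%:R i * ffactr (n - i)%:R (n - i).
  by rewrite -{2}(subnKC le_in) ffactrD natrB.
have ffn_neq0 : ffactr n%:R i != 0.
  by apply: contra_neq (fact_neq0 n) => ffn0; rewrite -ffactrnn split_nn ffn0 mul0r.
have split_x : ffactr x n = ffactr x (n - i) * ffactr (x - (n - i)%:R) i.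
  by rewrite -ffactrD subnK.
rewrite /binr split_x -(ffactrnn n) split_nn !ffactrnn.
by field; rewrite ff_neq0 ffn_neq0 fact_neq0.
Qed.

Lemma det_ffactr_Vandermonde n (a : 'rV[R]_n) :
  \det (\matrix_(i < n, j < n) ffactr (a 0 j) i) =
  \prod_(i < n) \prod_(j < n | (i < j)%N) (a 0 j - a 0 i).
Proof.
pose q i : {poly R} := \prod_(t < i) ('X - t%:R%:P).
have size_q i : size (q i) = i.+1.
  by rewrite size_prod_XsubC /index_enum -enumT size_enum_ord.
have q_ffactr i y : (q i).[y] = ffactr y i.
  by rewrite horner_prod; apply: eq_bigr => t _; rewrite hornerXsubC.
pose L := \matrix_(i < n, k < n) (q i)`_k.
have -> : \matrix_(i < n, j < n) ffactr (a 0 j) i = L *m Vandermonde n a.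
  apply/matrixP => i j; rewrite !mxE -q_ffactr (@horner_coef_wide _ n) ?size_q //.
  by apply: eq_bigr => k _; rewrite !mxE.
rewrite det_mulmx det_Vandermonde det_trig.
  rewrite big1 ?mul1r // => i _; rewrite mxE.
  have := lead_coef_prod_XsubC (index_enum 'I_i) xpredT (fun t : 'I_i => t%:R : R).
  by rewrite lead_coefE -/(q i) size_q.
by apply/is_trig_mxP => i k lt_ik; rewrite mxE nth_default // size_q.
Qed.

(* Right multiplication by the unitriangular matrix ['C(j, s)] turns the
   Toeplitz matrix into a falling-factorial Vandermonde matrix, up to
   diagonal factors. *)
Lemma det_binr_toeplitz x n M : (n <= M.+1)%N ->
  (forall i : 'I_n, ffactr (x - M%:R + i%:R) i != 0) ->
  \det (\matrix_(i < n, j < n) binr x (M + j - i)) =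
  \prod_(i < n) (ffactr (x - M%:R + i%:R) i)^-1 *
  \prod_(i < n) \prod_(j < n | (i < j)%N) (j - i)%:R *
  \prod_(j < n) binr (x + j%:R) (M + j).
Proof.
move=> le_nM ff_neq0.
pose B := \matrix_(s < n, j < n) 'C(j, s)%:R : 'M[R]_n.
have det_B : \det B = 1.
  rewrite -det_tr det_trig; first by rewrite big1 // => i _; rewrite !mxE binn.
  by apply/is_trig_mxP => i k lt_ik; rewrite !mxE bin_small.
pose d1 := \row_(i < n) (ffactr (x - M%:R + i%:R) i)^-1.
pose d2 := \row_(j < n) binr (x + j%:R) (M + j).
pose a := \row_(j < n) (M + j)%:R : 'rV[R]_n.
have factor : \matrix_(i < n, j < n) binr x (M + j - i) *m B =
    diag_mx d1 *m \matrix_(i < n, j < n) ffactr (a 0 j) i *m diag_mx d2.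
  apply/matrixP => i j; rewrite mul_mx_diag mul_diag_mx !mxE.
  have le_iMj : (i <= M + j)%N by have := ltn_ord i; lia.
  have shift : x + j%:R - (M + j - i)%:R = x - M%:R + i%:R.
    by rewrite natrB // natrD; ring.
  have := binr_subn (x := x + j%:R) le_iMj; rewrite shift => /(_ (ff_neq0 i)) <-.
  have -> : (M + j - i = M - i + j)%N by have := ltn_ord i; lia.
  rewrite binr_addn (big_ord_widen n (fun s => 'C(j, s)%:R * binr x (M - i + s)) (ltn_ord j)).
  rewrite [RHS]big_mkcond /=; apply: eq_bigr => s _; rewrite !mxE.
  case: ifP => lt_sj; first by rewrite mulrC; congr (_ * binr x _); have := ltn_ord i; lia.
  by rewrite bin_small ?mulr0 //; lia.
have := congr1 determinant factor.
rewrite !det_mulmx det_B mulr1 => ->.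
rewrite det_ffactr_Vandermonde !det_diag; congr (_ * _ * _).
- by apply: eq_bigr => i _; rewrite mxE.
- apply: eq_bigr => i _; apply: eq_bigr => j lt_ij.
  by rewrite !mxE -natrB ?leq_add2l 1?ltnW // subnDl.
- by apply: eq_bigr => j _; rewrite mxE.
Qed.

End GeneralizedBinomial.

Section SignedDeterminants.

Variable R : comNzRingType.

Lemma det_sign_toeplitz (f : nat -> R) n M : (n <= M.+1)%N ->
  \det (\matrix_(u < n, v < n) ((-1) ^+ (M + v - u) * f (M + v - u)%N)) =
  (-1) ^+ (M * n) * \det (\matrix_(u < n, v < n) f (M + v - u)%N).
Proof.
move=> le_nM.
pose d1 := \row_(u < n) (-1) ^+ u : 'rV[R]_n.
pose d2 := \row_(v < n) (-1) ^+ (M + v) : 'rV[R]_n.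
have -> : \matrix_(u < n, v < n) ((-1) ^+ (M + v - u) * f (M + v - u)%N) =
    diag_mx d1 *m \matrix_(u < n, v < n) f (M + v - u)%N *m diag_mx d2.
  apply/matrixP => u v; rewrite mul_mx_diag mul_diag_mx !mxE.
  have -> : (M + v = M + v - u + u)%N by have := ltn_ord u; lia.
  by rewrite addnK exprD mulrAC -!mulrA mulrCA signrMK.
rewrite !det_mulmx !det_diag mulrAC -big_split /=; congr (_ * _).
rewrite (eq_bigr (fun _ => (-1) ^+ M)) ?prodr_const ?card_ord -?exprM //.
by move=> u _; rewrite !mxE addnC exprD signrMK.
Qed.

Lemma det_perm_ublock a b (A : 'M[R]_(a + b)) (s t : 'S_(a + b)) :
  (forall u v, A (s (rshift a u)) (t (lshift b v)) = 0) ->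
  \det A = (-1) ^+ (s (+) t) *
    (\det (\matrix_(u, v) A (s (lshift b u)) (t (lshift b v))) *
     \det (\matrix_(u, v) A (s (rshift a u)) (t (rshift a v)))).
Proof.
move=> A_zero.
have block : row_perm s (col_perm t A) = block_mx
    (\matrix_(u, v) A (s (lshift b u)) (t (lshift b v)))
    (\matrix_(u, v) A (s (lshift b u)) (t (rshift a v))) 0
    (\matrix_(u, v) A (s (rshift a u)) (t (rshift a v))).
  apply/matrixP => i j; rewrite -(splitK i) -(splitK j).
  case: (split i) => u; case: (split j) => v /=;
    by rewrite ?block_mxEul ?block_mxEur ?block_mxEdl ?block_mxEdr !mxE ?A_zero.
have := congr1 determinant block.
rewrite det_ublock row_permE col_permE !det_mulmx !det_perm odd_permV => <-.
by rewrite signr_addb mulrACA -expr2 sqrr_sign mul1r mulrCA -expr2 sqrr_sign mulr1.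
Qed.

End SignedDeterminants.

Definition upsample (R : zmodType) (g : nat -> R) (z : int) : R :=
  if z is Posz n then (if odd n then 0 else g n./2) else 0.

Lemma upsample_doubleE (R : zmodType) (g : nat -> R) (z : int) n :
  z = (2 * n)%N -> upsample g z = g n.
Proof. by move=> ->; rewrite /upsample oddM /= mul2n doubleK. Qed.

Lemma upsample_double (R : zmodType) (g : nat -> R) n : upsample g (2 * n)%N = g n.
Proof. exact: upsample_doubleE. Qed.

Lemma upsample_oddE (R : zmodType) (g : nat -> R) (z w : int) :
  z = 2 * w + 1 -> upsample g z = 0.
Proof. by case: z => [n|n] // E; rewrite /upsample (_ : odd n) //; lia. Qed.

Definition interleave (a : nat) (o : bool) (i : nat) : nat :=
  if (i < a)%N then (2 * i + o)%N else (2 * (i - a) + ~~ o)%N.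

Lemma interleave_inj a o : injective (interleave a o).
Proof. by move=> i j; rewrite /interleave; case: ifP; case: ifP; lia. Qed.

(* Rows are listed evens first, columns evens first if [N] is even ([o] true)
   and odds first otherwise, so that every nonzero entry of the Toeplitz matrix
   lands in one of the two diagonal blocks. *)
Lemma det_upsample_toeplitz (R : comNzRingType) (g : nat -> R) (m M : nat) (o : bool) (N : int) :
  (m + o <= M.+1)%N -> (m + ~~ o <= M.+1)%N -> N = (2 * M + o)%:Z - 1 ->
  exists e, \det (\matrix_(i < m + o + m, j < m + o + m) upsample g (N + j%:Z - i%:Z)) =
    (-1) ^+ e * (\det (\matrix_(u < m + o, v < m + o) g (M + v - u)%N) *
                 \det (\matrix_(u < m, v < m) g (M - ~~ o + v - u)%N)).
Proof.
move=> le_aM le_bM ->.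
have lt_row (i : 'I_(m + o + m)) : (interleave (m + o) false i < m + o + m)%N.
  by have := ltn_ord i; rewrite /interleave; case: ifP; lia.
have lt_col (i : 'I_(m + o + m)) : (interleave (m + o) (~~ o) i < m + o + m)%N.
  by have := ltn_ord i; rewrite /interleave; case: ifP; lia.
have inj_row : injective (fun i => Ordinal (lt_row i)).
  by move=> i j [/interleave_inj/val_inj].
have inj_col : injective (fun i => Ordinal (lt_col i)).
  by move=> i j [/interleave_inj/val_inj].
rewrite (det_perm_ublock (s := perm inj_row) (t := perm inj_col)); last first.
  move=> u v; rewrite !mxE !permE /= /interleave ltn_ord ltnNge leq_addr /=.
  by apply: (@upsample_oddE _ _ _ (M%:Z + v%:Z - u%:Z - 1)); rewrite addKn; lia.
eexists; congr (_ * (_ * _)); f_equal; apply/matrixP => u v; rewrite !mxE !permE /=.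
  rewrite /interleave !ltn_ord; apply: upsample_doubleE.
  by have := ltn_ord u; lia.
rewrite /interleave !ltnNge !leq_addr /= !addKn; apply: upsample_doubleE.
by have := ltn_ord u; lia.
Qed.

Lemma cs_0_4_0S r m : cs r 0 4 0 m.+1 =
  let '(x1, x2, x3, x4) := cs r 0 4 0 m in
  (m.+1%:R^-1 * ((2 * m.+1%:R - 3 - 2 * r%:R) * x2 - (m.+1%:R - 3 - 2 * r%:R) * x4),
   x1, x2, x3).
Proof.
rewrite /=; case: (cs r 0 4 0 m) => [[[x1 x2] x3] x4]; congr (_, _, _, _).
have -> : (0 ^+ 2 - 4) / 4 = -1 :> rat by rewrite expr0n sub0r mulNr divff.
by rewrite !intrB !intrM -!pmulrn; ring.
Qed.

Definition c_even (r t : nat) : rat := (-1) ^+ t * binr (r%:R - 2^-1) t.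

Lemma c_evenSS r j : (2 * j%:R + 4) * c_even r j.+2 =
  (4 * j%:R + 5 - 2 * r%:R) * c_even r j.+1 - (2 * j%:R + 1 - 2 * r%:R) * c_even r j.
Proof.
rewrite /c_even !binrSr !exprS -!natr1.
have j1_neq0 : j%:R + 1 != 0 :> rat by rewrite natr1 pnatr_eq0.
have j2_neq0 : j%:R + 1 + 1 != 0 :> rat by rewrite !natr1 pnatr_eq0.
by field; rewrite j1_neq0 j2_neq0.
Qed.

Lemma upsample_c_even_rec r n :
  (n + 4)%:R * upsample (c_even r) (n + 4)%N =
  (2 * n%:R + 5 - 2 * r%:R) * upsample (c_even r) (n + 2)%N -
  (n%:R + 1 - 2 * r%:R) * upsample (c_even r) n.
Proof.
have [n_odd|n_even] := boolP (odd n).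
  by rewrite /upsample !oddD n_odd /= !mulr0 subrr.
have [j ->] : exists j, n = (2 * j)%N by exists n./2; rewrite mul2n even_halfK.
have -> : (2 * j + 4 = 2 * j.+2)%N by lia.
have -> : (2 * j + 2 = 2 * j.+1)%N by lia.
rewrite !upsample_double.
by apply: etrans (etrans _ (c_evenSS r j)) _; rewrite ?natrD ?natrM; ring.
Qed.

Lemma cs_0_4_0 r m : let h := upsample (c_even r) in
  cs r 0 4 0 m = (h m, h (m%:Z - 1), h (m%:Z - 2), h (m%:Z - 3)).
Proof.
move=> h; elim: m => [|m IHm].
  by rewrite /h /= /c_even binr0 mulr1.
rewrite cs_0_4_0S IHm; congr (_, _, _, _); last by congr (h _); lia.
case: m {IHm} => [|[|[|q]]].
- by rewrite /h /=; field.
- by rewrite /h /upsample /= /c_even binr0 binrSr binr0; field.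
- by rewrite /h /=; field.
have -> : (q.+3%:Z - 1 = (q + 2)%N) by lia.
have -> : (q.+3%:Z - 3 = q) by lia.
apply: (@mulfI _ (q + 4)%:R); first by rewrite pnatr_eq0 addn4.
have := upsample_c_even_rec r q; rewrite /h !addn4 => ->.
by rewrite mulrA mulfV ?pnatr_eq0 // mul1r -addn4 natrD; ring.
Qed.

Lemma c_0_4_0 r : c r 0 4 0 =1 upsample (c_even r).
Proof. by case=> [m|m] //; rewrite /c cs_0_4_0. Qed.

Definition punit (p : nat) (x : rat) : Prop :=
  exists a b : int, [/\ ~~ (p%:Z %| a)%Z, ~~ (p%:Z %| b)%Z & x = a%:~R / b%:~R].

Section PUnit.

Variable p : nat.
Hypotheses (p_prime : prime p) (p_odd : odd p).

Lemma ndvdzM (a b : int) :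
  ~~ (p%:Z %| a)%Z -> ~~ (p%:Z %| b)%Z -> ~~ (p%:Z %| a * b)%Z.
Proof. by rewrite !dvdzE abszM Euclid_dvdM // negb_or => -> ->. Qed.

Lemma ndvdz_small (z : int) : z != 0 -> (`|z| < p)%N -> ~~ (p%:Z %| z)%Z.
Proof.
move=> z_neq0 z_lt_p; rewrite dvdzE /=; apply/negP => /dvdn_leq.
by rewrite absz_gt0 z_neq0 leqNgt z_lt_p => /(_ isT).
Qed.

Lemma punit_int (z : int) : z != 0 -> (`|z| < p)%N -> punit p z%:~R.
Proof.
move=> z_neq0 z_lt_p; exists z, 1; split; first exact: ndvdz_small.
  by rewrite dvdzE /= Euclid_dvd1.
by rewrite divr1.
Qed.

Lemma punit1 : punit p 1.
Proof. exact: (@punit_int 1) (prime_gt1 p_prime). Qed.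

Lemma punit_nat (n : nat) : (0 < n < p)%N -> punit p n%:R.
Proof. by move=> /andP[n_gt0 n_lt_p]; rewrite pmulrn; apply: punit_int; lia. Qed.

Lemma punit_half (z : int) : z != 0 -> (`|z| < p)%N -> punit p (z%:~R / 2).
Proof.
move=> z_neq0 z_lt_p; exists z, 2; split => //; first exact: ndvdz_small.
have := odd_prime_gt2 p_odd p_prime.
by rewrite dvdzE ltnNge; apply: contra => /dvdn_leq ->.
Qed.

Lemma punitM x y : punit p x -> punit p y -> punit p (x * y).
Proof.
move=> [a [b [pa pb ->]]] [c [d [pc pd ->]]].
exists (a * c), (b * d); split; try exact: ndvdzM.
by rewrite !intrM invfM; ring.
Qed.

Lemma punitV x : punit p x -> punit p x^-1.
Proof. by move=> [a [b [pa pb ->]]]; exists b, a; rewrite invf_div. Qed.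

Lemma punitN x : punit p x -> punit p (- x).
Proof.
move=> [a [b [pa pb ->]]]; exists (- a), b.
by rewrite dvdzE abszN -dvdzE intrN mulNr.
Qed.

Lemma punit_sign n : punit p ((-1) ^+ n).
Proof.
elim: n => [|n IHn]; first exact: punit1.
by rewrite exprS mulN1r; apply: punitN.
Qed.

Lemma punit_prod (I : Type) (r : seq I) (P : pred I) (F : I -> rat) :
  (forall i, P i -> punit p (F i)) -> punit p (\prod_(i <- r | P i) F i).
Proof. by move=> punitF; apply: big_ind punitF; [exact: punit1 | exact: punitM]. Qed.

Lemma punit_neq0 x : punit p x -> x != 0.
Proof.
move=> [a [b [pa pb ->]]]; rewrite mulf_neq0 ?invr_eq0 ?intr_eq0 //.
  by apply: contraNneq pa => ->; rewrite dvdz0.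
by apply: contraNneq pb => ->; rewrite dvdz0.
Qed.

(* From [numq x * b = a * denq x] and coprimality of [numq x] and [denq x]. *)
Lemma punit_not_zero_modp x : punit p x -> not_zero_modp p x.
Proof.
move=> [a [b [pa pb x_ab]]].
have b_neq0 : (b%:~R : rat) != 0 by rewrite intr_eq0; apply: contraNneq pb => ->.
have cross : numq x * b = a * denq x.
  by apply/eqP; rewrite -(eqr_int rat) !intrM numqE x_ab; apply/eqP; field.
have not_both (n d : int) : coprime `|n| `|d| -> (p%:Z %| n)%Z -> ~~ (p%:Z %| d)%Z.
  move=> nd pn; apply/negP => pd; have := prime_gt1 p_prime.
  have : (p %| gcdn `|n| `|d|)%N by move: pn pd; rewrite dvdn_gcd !dvdzE => -> ->.
  by rewrite (eqP nd) dvdn1 => /eqP ->.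
have cop := coprime_num_den x.
apply/andP; split; apply/negP => pdiv.
- have : (p%:Z %| numq x * b)%Z by rewrite cross dvdz_mull.
  rewrite dvdzE abszM Euclid_dvdM // -!dvdzE; case/orP => [pn|]; last exact/negP.
  by move: (not_both _ _ cop pn); rewrite pdiv.
- have : (p%:Z %| a * denq x)%Z by rewrite -cross dvdz_mulr.
  rewrite dvdzE abszM Euclid_dvdM // -!dvdzE; case/orP => [|pd]; first exact/negP.
  by move: (not_both _ _ cop pdiv); rewrite pd.
Qed.

Lemma punit_fact n : (n < p)%N -> punit p n`!%:R.
Proof.
elim: n => [|n IHn] lt_np; first exact: punit1.
by rewrite factS natrM; apply: punitM; [apply: punit_nat | apply: IHn]; lia.
Qed.

Lemma punit_ffactr_half (z : int) n :
  (forall t, (t < n)%N -> (`|(2 * z - 2 * t%:Z - 1)%R| < p)%N) ->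
  punit p (ffactr (z%:~R - 2^-1) n).
Proof.
move=> small; apply: punit_prod => t _.
have -> : z%:~R - 2^-1 - t%:R = (2 * z - 2 * t%:Z - 1)%:~R / 2 :> rat.
  by rewrite !intrB !intrM -pmulrn; field.
by apply: punit_half => //; [apply/eqP; lia | apply: small].
Qed.

Lemma punit_det_binr_toeplitz r n M : (n <= M.+1)%N -> (M + n <= p)%N ->
  (2 * r + 2 * n < p + 3)%N -> (2 * M < p + 2 * r + 1)%N ->
  punit p (\det (\matrix_(i < n, j < n) binr (r%:R - 2^-1) (M + j - i))).
Proof.
move=> le_nM le_Mnp r_small M_small.
have punit_ff (i : 'I_n) : punit p (ffactr (r%:R - 2^-1 - M%:R + i%:R) i).
  have -> : r%:R - 2^-1 - M%:R + i%:R = (r%:Z - M%:Z + i%:Z)%:~R - 2^-1 :> rat.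
    by rewrite !intrD intrN -!pmulrn; ring.
  by apply: punit_ffactr_half => t lt_ti; have := ltn_ord i; lia.
rewrite det_binr_toeplitz // => [|i]; last exact: punit_neq0 (punit_ff i).
apply: punitM; first apply: punitM.
- by apply: punit_prod => i _; apply: punitV.
- apply: punit_prod => i _; apply: punit_prod => j lt_ij.
  by apply: punit_nat; have := ltn_ord j; lia.
- apply: punit_prod => j _; have := ltn_ord j => lt_jn.
  apply: punitM; last by apply/punitV/punit_fact; lia.
  have -> : r%:R - 2^-1 + j%:R = (r + j)%N%:~R - 2^-1 :> rat.
    by rewrite -pmulrn natrD; ring.
  by apply: punit_ffactr_half => t lt_tMj; lia.
Qed.

Lemma punit_det_c_even_toeplitz r n M : (n <= M.+1)%N -> (M + n <= p)%N ->
  (2 * r + 2 * n < p + 3)%N -> (2 * M < p + 2 * r + 1)%N ->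
  punit p (\det (\matrix_(u < n, v < n) c_even r (M + v - u))).
Proof.
move=> le_nM le_Mnp r_small M_small.
rewrite /c_even det_sign_toeplitz //.
by apply: punitM; [apply: punit_sign | apply: punit_det_binr_toeplitz].
Qed.

End PUnit.

Theorem proposition4p3 (r k p : nat) :
  (1 <= r)%N -> (1 <= k)%N -> prime p -> odd p -> (k + 2 * r - 2 < p)%N ->
  not_zero_modp p (P r k 0 4 0).
Proof.
move=> r_gt0 _ p_prime p_odd k_small; apply: punit_not_zero_modp => //.
have [m [o Ek]] : exists m (o : bool), k = (m + o + m)%N.
  by exists k./2, (odd k); have := odd_double_half k; lia.
subst k; rewrite /P; under eq_mx => i j do rewrite c_0_4_0.
have [|||e ->] := @det_upsample_toeplitz _ (c_even r) m (m + r) o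
  ((m + o + m)%:Z + 2 * r%:Z - 1); try lia.
apply: punitM => //; first exact: punit_sign.
by apply: punitM => //; apply: punit_det_c_even_toeplitz => //; lia.
Qed.
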